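(* Fix an iteration $k$, a current policy $\pi_k$, and $M_k:\mathcal Q\to(0,\infty)$. Assume $1-\rho^+(q)-\rho^-(q)>0$ and $1-\hat\rho^+(q)-\hat\rho^-(q)>0$ for all $q$. Define the corrected reward with estimated rates $\hat r(q,o,\xi)=\frac{\tilde r(q,o,\xi)-\hat\rho^+(q)}{1-\hat\rho^+(q)-\hat\rho^-(q)}$, the surrogate \[ \hat L_{\pi_k}(\pi(\cdot\mid q))=\frac{\mathbb E_{o\sim\pi(\cdot\mid q)}\mathbb E_{\xi}[\hat r(q,o,\xi)]-\mathbb E_{o\sim\pi_k(\cdot\mid q)}\mathbb E_{\xi}[\hat r(q,o,\xi)]}{M_k(q)}, \] and $M_k'(q)=\frac{1-\hat\rho^+(q)-\hat\rho^-(q)}{1-\rho^+(q)-\rho^-(q)}M_k(q)$. Then for every policy $\pi$, \[ \mathbb{E}_{q\sim\rho_{\mathcal Q}}\bigl[p_{\pi}(q)-p_{\pi_k}(q)\bigr] \ge \mathbb{E}_{q\sim\rho_{\mathcal Q}}\bigl[\hat L_{\pi_k}(\pi(\cdot\mid q))\bigr] -2\sqrt{\mathbb{E}_{q\sim\rho_{\mathcal Q}}\Bigl(\tfrac{1-M'_k(q)}{M'_k(q)}\Bigr)^2}\; \sqrt{\mathbb{E}_{q\sim\rho_{\mathcal Q}}\mathrm{TV}^2\bigl(\pi(\cdot\mid q)\,\|\,\pi_k(\cdot\mid q)\bigr)}. \]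
   Context: Setting: $\mathcal Q$ is a set of prompts with a probability distribution $\rho_{\mathcal Q}$; $\mathcal O$ is a countable set of responses; $r^*:\mathcal Q\times\mathcal O\to\{0,1\}$ is the true binary reward; a policy gives a distribution $\pi(\cdot\mid q)$ on $\mathcal O$; $p_\pi(q)=\mathbb E_{o\sim\pi(\cdot\mid q)}[r^*(q,o)]$. $\mathrm{TV}(P,Q)=\sup_A|P(A)-Q(A)|$. Noise model: true flip rates $\rho^+(q),\rho^-(q)\in[0,1]$; with $\xi\sim U[0,1]$ independent of $(q,o)$, $\tilde r(q,o,\xi)=(1-r^*(q,o))\mathbf 1_{\{\xi\le\rho^+(q)\}}+r^*(q,o)\mathbf 1_{\{\xi\le 1-\rho^-(q)\}}$. $\hat\rho^+(q),\hat\rho^-(q)$ are arbitrary (estimated) values used in place of the true flip rates; $\mathbb E_\xi$ is expectation over $\xi\sim U[0,1]$. *)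

From HB Require Import structures.
From mathcomp Require Import all_boot all_order all_algebra.
From mathcomp Require Import all_classical all_reals all_analysis.
Set Implicit Arguments. Unset Strict Implicit. Unset Printing Implicit Defensive.
Import Order.TTheory GRing.Theory Num.Theory.
Import numFieldNormedType.Exports.
Local Open Scope classical_set_scope.
Local Open Scope ring_scope.

Section NoisyRL.
Variables (R : realType) (Q : Type) (O : countType).

Definition is_policy (pi : Q -> O -> R) : Prop :=
  forall q, (forall o, 0 <= pi q o) /\ (\esum_(o in [set: O]) (pi q o)%:E = 1)%E.

Definition Eo (p : O -> R) (f : O -> R) : R :=
  fine (\esum_(o in [set: O]) (fun o => (p o * f o)%:E)^\+ o)%E
  - fine (\esum_(o in [set: O]) (fun o => (p o * f o)%:E)^\- o)%E.

Definition pmass (p : O -> R) (A : set O) : R :=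
  fine (\esum_(o in A) (p o)%:E)%E.

Definition TV (p p' : O -> R) : R :=
  sup [set `|pmass p A - pmass p' A| | A in [set: set O]].

Definition Exi (f : R -> R) : R :=
  fine (\int[@lebesgue_measure R]_(xi in `[0%R, 1%R]) (f xi)%:E)%E.

Definition p_pol (rstar : Q -> O -> bool) (pi : Q -> O -> R) (q : Q) : R :=
  Eo (pi q) (fun o => (rstar q o)%:R).

Definition rtilde (rstar : Q -> O -> bool) (rhop rhom : Q -> R)
  (q : Q) (o : O) (xi : R) : R :=
  (1 - (rstar q o)%:R) * (if xi <= rhop q then 1 else 0)
  + (rstar q o)%:R * (if xi <= 1 - rhom q then 1 else 0).

Definition rhat (rstar : Q -> O -> bool) (rhop rhom hrhop hrhom : Q -> R)
  (q : Q) (o : O) (xi : R) : R :=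
  (rtilde rstar rhop rhom q o xi - hrhop q) / (1 - hrhop q - hrhom q).

Definition Lhat (rstar : Q -> O -> bool) (rhop rhom hrhop hrhom : Q -> R)
  (Mk : Q -> R) (pik pi : Q -> O -> R) (q : Q) : R :=
  (Eo (pi q) (fun o => Exi (rhat rstar rhop rhom hrhop hrhom q o))
   - Eo (pik q) (fun o => Exi (rhat rstar rhop rhom hrhop hrhom q o))) / Mk q.

Definition Mk' (rhop rhom hrhop hrhom Mk : Q -> R) (q : Q) : R :=
  (1 - hrhop q - hrhom q) / (1 - rhop q - rhom q) * Mk q.

End NoisyRL.

From HB Require Import structures.
From mathcomp Require Import all_boot all_order all_algebra.
From mathcomp Require Import all_classical all_reals all_analysis.
From mathcomp Require Import measurable_realfun.
From mathcomp Require Import ring lra.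
Set Implicit Arguments.
Unset Strict Implicit.
Unset Printing Implicit Defensive.
Import Order.TTheory GRing.Theory Num.Theory.
Import numFieldNormedType.Exports.
Local Open Scope classical_set_scope.
Local Open Scope ring_scope.

(* Averaged over xi, the corrected reward is affine in the true reward with
   slope (1 - rho+ - rho-) / (1 - hrho+ - hrho-), so the surrogate is exactly
   Lhat(q) = gap(q) / M'(q) with gap(q) = p_pi(q) - p_pik(q).  Writing
   gap / M' = gap + gap * (1 - M') / M', the expectation of the second term is
   controlled by Cauchy-Schwarz, because gap(q) is the difference of the masses
   that pi(.|q) and pik(.|q) give to the event {o | r*(q, o)}, hence
   |gap(q)| <= TV(pi(.|q), pik(.|q)).  The factor 2 in the statement is
   slack. *)

Section countable_esum.
Variables (R : realType) (O : countType).
Local Open Scope ereal_scope.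

Lemma esum_pickle (F : O -> \bar R) : (forall o, 0 <= F o) ->
  \esum_(o in [set: O]) F o = \sum_(j <oo) oapp F 0 (pickle_inv j).
Proof.
move=> F0.
have F0' j : 0 <= oapp F 0 (@pickle_inv O j) by case: (@pickle_inv O j).
rewrite nneseries_esumT // (@esumID _ _ (range (@pickle O))) ?setTI;
  last by move=> j _.
rewrite [X in _ + X]esum1 ?adde0; last first.
  move=> j nj; case Ej: (@pickle_inv O j) => [x |] //.
  case: nj; exists x => //.
  by have := @pickle_invK O j; rewrite Ej.
rewrite esum_image; last by move=> x y _ _; exact: (pcan_inj (@pickleK_inv O)).
by apply: eq_esum => o _; rewrite pickleK_inv.
Qed.

Lemma esumZl (S : set O) (c : R) (F : O -> \bar R) : (0 <= c)%R ->
  (forall o, 0 <= F o) ->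
  \esum_(o in S) (c%:E * F o) = c%:E * \esum_(o in S) F o.
Proof.
move=> c0 F0; rewrite !(esum_mkcond S).
rewrite esum_pickle; last by move=> o; case: ifP => // _; rewrite mule_ge0.
rewrite esum_pickle; last by move=> o; case: ifP.
rewrite -nneseriesZl; last first.
  by move=> j _; case: (@pickle_inv O j) => //= o; case: ifP.
apply: eq_eseriesr => j _.
by case: (@pickle_inv O j) => [x |] /=; [case: ifP|]; rewrite ?mule0.
Qed.

Lemma measurable_esum d (T : measurableType d) (F : T -> O -> \bar R) :
  (forall t o, 0 <= F t o) -> (forall o, measurable_fun [set: T] (F ^~ o)) ->
  measurable_fun [set: T] (fun t => \esum_(o in [set: O]) F t o).
Proof.
move=> F0 mF; rewrite (funext (fun t => esum_pickle (F0 t))).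
apply: (@ge0_emeasurable_sum _ _ _ _ _ xpredT) => [j t _ _|j _].
  by case: (@pickle_inv O j) => [x |] //=; exact: F0.
by case: (@pickle_inv O j) => [x |] /=; [exact: mF x | exact: measurable_cst].
Qed.

End countable_esum.

Section pmf.
Variables (R : realType) (O : countType) (p : O -> R).
Hypotheses (p_ge0 : forall o, 0 <= p o)
  (p_sum1 : (\esum_(o in [set: O]) (p o)%:E = 1)%E).

Lemma esum_pmf_fin_num (A : set O) : (\esum_(o in A) (p o)%:E \is a fin_num)%E.
Proof.
have A0 : (0 <= \esum_(o in A) (p o)%:E)%E.
  by apply: esum_ge0 => o _; rewrite lee_fin.
rewrite ge0_fin_numE // (@le_lt_trans _ _ 1%E) ?ltry // -p_sum1 (esum_mkcond A).
by apply: le_esum => o _; case: ifP; rewrite ?lee_fin.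
Qed.

Lemma pmass_ge0 (A : set O) : 0 <= pmass p A.
Proof. by rewrite fine_ge0 // esum_ge0 // => o _; rewrite lee_fin. Qed.

Lemma pmassC (A : set O) : pmass p (~` A) = 1 - pmass p A.
Proof.
have := p_sum1; rewrite (esumID A) ?setTI => [sum1|o _]; last first.
  by rewrite lee_fin.
rewrite /pmass -[1]/(fine 1%E) -sum1 fineD ?esum_pmf_fin_num //.
by rewrite addrAC subrr add0r.
Qed.

Lemma pmass_le1 (A : set O) : pmass p A <= 1.
Proof. by rewrite -subr_ge0 -pmassC pmass_ge0. Qed.

Lemma esum_pmf_if (r : O -> bool) (u v : R) : 0 <= u -> 0 <= v ->
  (\esum_(o in [set: O]) (p o * (if r o then v else u))%:E =
   (v * pmass p [set o | r o] + u * pmass p (~` [set o | r o]))%:E)%E.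
Proof.
move=> u0 v0; rewrite (esumID [set o | r o]) ?setTI; last first.
  by move=> o _; rewrite lee_fin mulr_ge0 //; case: ifP.
rewrite (eq_esum (b := fun o => v%:E * (p o)%:E)%E); last first.
  by move=> o /= ->; rewrite -EFinM mulrC.
rewrite [X in (_ + X)%E](eq_esum (b := fun o => u%:E * (p o)%:E)%E); last first.
  by move=> o /negP/negbTE /= ->; rewrite -EFinM mulrC.
rewrite !esumZl //; try by move=> o; rewrite lee_fin.
by rewrite /pmass EFinD !EFinM !fineK ?esum_pmf_fin_num.
Qed.

Lemma Eo_if (r : O -> bool) (a b : R) :
  Eo p (fun o => if r o then b else a) =
  a * (1 - pmass p [set o | r o]) + b * pmass p [set o | r o].
Proof.
have max0E (x : R) : Num.max x 0 - Num.max (- x) 0 = x.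
  by rewrite !maxEle; do 2 case: ifPn; lra.
have posE : (fun o => (p o * (if r o then b else a))%:E)^\+%E =
    fun o => (p o * (if r o then Num.max b 0 else Num.max a 0))%:E.
  by apply/funext => o; rewrite funeposE; case: (r o);
    rewrite -EFin_max maxr_pMr // mulr0.
have negE : (fun o => (p o * (if r o then b else a))%:E)^\-%E =
    fun o => (p o * (if r o then Num.max (- b) 0 else Num.max (- a) 0))%:E.
  by apply/funext => o; rewrite funenegE; case: (r o);
    rewrite -EFinN -mulrN -EFin_max maxr_pMr // mulr0.
rewrite /Eo posE negE !esum_pmf_if ?le_max ?lexx ?orbT //= pmassC.
by rewrite -[in RHS](max0E a) -[in RHS](max0E b); ring.
Qed.

End pmf.

Section pmf_pair.
Variables (R : realType) (O : countType) (p p' : O -> R).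
Hypotheses (p_ge0 : forall o, 0 <= p o)
  (p_sum1 : (\esum_(o in [set: O]) (p o)%:E = 1)%E).
Hypotheses (p'_ge0 : forall o, 0 <= p' o)
  (p'_sum1 : (\esum_(o in [set: O]) (p' o)%:E = 1)%E).

Lemma normB_pmass_le1 (A : set O) : `|pmass p A - pmass p' A| <= 1.
Proof.
have := pmass_ge0 p_ge0 A; have := pmass_le1 p_ge0 p_sum1 A.
have := pmass_ge0 p'_ge0 A; have := pmass_le1 p'_ge0 p'_sum1 A.
by rewrite ler_norml => *; apply/andP; split; lra.
Qed.

Lemma normB_pmass_le_TV (A : set O) : `|pmass p A - pmass p' A| <= TV p p'.
Proof.
apply: ub_le_sup; last by exists A.
by exists 1 => _ [B _ <-]; exact: normB_pmass_le1.
Qed.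

End pmf_pair.

Lemma Exi_if_le (R : realType) (t u v : R) : 0 <= t <= 1 ->
  Exi (fun xi => if xi <= t then u else v) = t * u + (1 - t) * v.
Proof.
case/andP=> t0 t1; rewrite /Exi.
have mf : measurable_fun [set: R] (fun xi : R => if xi <= t then u else v).
  by apply: measurable_fun_ifT => //; exact: measurable_fun_ler.
have -> : `[0, 1]%classic = `[0, t]%classic `|` `]t, 1]%classic :> set R.
  by apply: itv_bndbnd_setU; rewrite bnd_simp.
rewrite integral_setU //; last 2 first.
- by apply: measurable_funTS; exact/measurable_EFinP.
- apply: lt_disjoint => x y; rewrite !in_itv /= => /andP[_ xt] /andP[ty _].
  exact: le_lt_trans xt ty.
rewrite (eq_integral (fun _ => u%:E)); last first.
  by move=> x; rewrite inE /= in_itv /= => /andP[_ ->].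
rewrite [X in (_ + X)%E](eq_integral (fun _ => v%:E)); last first.
  by move=> x; rewrite inE /= in_itv /= => /andP[tx _]; rewrite leNgt tx.
rewrite !integral_cst //= !lebesgue_measure_itv /= !lte_fin.
have [t_gt0|t_le0] := ltP 0 t; have [t_lt1|t_ge1] := ltP t 1.
- by rewrite -!EFinB -!EFinM -!EFinD /= subr0 mulrC [v * _]mulrC.
- have -> : t = 1 by apply/eqP; rewrite eq_le t1 t_ge1.
  by rewrite -!EFinB mule0 adde0 -!EFinM /= subr0 subrr mul0r addr0 mulrC.
- have -> : t = 0 by apply/eqP; rewrite eq_le t0 t_le0.
  by rewrite mule0 add0e -!EFinB -!EFinM /= subr0 mul0r add0r mulrC.
- lra.
Qed.

Lemma measurable_inv_pos d (T : measurableType d) (R : realType) (f : T -> R) :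
  (forall x, 0 < f x) -> measurable_fun [set: T] f ->
  measurable_fun [set: T] (fun x => (f x)^-1).
Proof.
move=> f0 mf; change (measurable_fun [set: T] (GRing.inv \o f)).
apply: (measurable_comp (F := `]0, +oo[%classic : set R)) mf.
- exact: measurable_itv.
- by move=> _ [x _ <-]; rewrite /= in_itv /= andbT.
- apply: open_continuous_measurable_fun; first exact: interval_open.
  move=> x; rewrite inE /= in_itv /= andbT => x0.
  by apply: inv_continuous; rewrite gt_eqF.
Qed.

Section integral_bounds.
Context d (T : measurableType d) (R : realType).
Variable mu : {measure set T -> \bar R}.
Local Open Scope ereal_scope.

Lemma Lnorm2E (f : T -> R) :
  'N[mu]_2%:E[EFin \o f] = sqrte (\int[mu]_x (f x ^+ 2)%:E).
Proof.
rewrite unlock /= -poweR12_sqrt; last first.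
  by apply: integral_ge0 => x _; rewrite lee_fin sqr_ge0.
congr (_ `^ _); apply: eq_integral => x _.
by rewrite powR_mulrn // real_normK // num_real.
Qed.

Lemma cauchy_schwarz (f g : T -> R) :
  measurable_fun [set: T] f -> measurable_fun [set: T] g ->
  \int[mu]_x `|f x * g x|%:E <=
  sqrte (\int[mu]_x (f x ^+ 2)%:E) * sqrte (\int[mu]_x (g x ^+ 2)%:E).
Proof.
move=> mf mg; rewrite -!Lnorm2E.
apply: le_trans (hoelder mu mf mg _ _ _) => //; last by field.
by rewrite Lnorm1.
Qed.

(* No measurability is needed: the integral of a nonnegative function is the
   supremum of the integrals of the simple functions below it. *)
Lemma le_integral_ge0 (f g : T -> \bar R) : (forall x, 0 <= f x) ->
  (forall x, f x <= g x) -> \int[mu]_x f x <= \int[mu]_x g x.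
Proof.
move=> f0 fg; have g0 x : 0 <= g x by exact: le_trans (f0 x) (fg x).
rewrite !ge0_integralTE //; apply: le_ereal_sup => _ [h hf <-].
by exists h => //= x; exact: le_trans (hf x) (fg x).
Qed.

Lemma integralD_sub_abs_le (f u : T -> R) :
  mu.-integrable [set: T] (EFin \o f) -> measurable_fun [set: T] u ->
  \int[mu]_x (f x + u x)%:E - \int[mu]_x `|u x|%:E <= \int[mu]_x (f x)%:E.
Proof.
move=> intf um.
have [uoo|] := ltP (\int[mu]_x `|u x|%:E) +oo; last first.
  by rewrite leye_eq => /eqP ->; rewrite addeNy leNye.
have intu : mu.-integrable [set: T] (EFin \o u).
  by apply/integrableP; split => //; exact/measurable_EFinP.
have u_fin : \int[mu]_x `|u x|%:E \is a fin_num.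
  by rewrite ge0_fin_numE // integral_ge0.
under eq_integral do rewrite EFinD.
rewrite (integralD_EFin measurableT intf intu).
rewrite -[leRHS](addeK _ u_fin) leeB // leeD2l //.
apply: le_trans (lee_abs _) (le_abse_integral _ _ _) => //.
exact/measurable_EFinP.
Qed.

Lemma integral_div_sub_le (f m h : T -> R) :
  mu.-integrable [set: T] (EFin \o f) -> measurable_fun [set: T] m ->
  (forall x, 0 < m x)%R -> (forall x, `|f x| <= h x)%R ->
  \int[mu]_x (f x / m x)%:E
    - sqrte (\int[mu]_x (((1 - m x) / m x) ^+ 2)%:E)
      * sqrte (\int[mu]_x (h x ^+ 2)%:E)
  <= \int[mu]_x (f x)%:E.
Proof.
move=> intf mm m0 fh; set g := fun x => ((1 - m x) / m x)%R.
have mf : measurable_fun [set: T] f.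
  by apply/measurable_EFinP; exact: measurable_int intf.
have mg : measurable_fun [set: T] g.
  apply: measurable_funM; first exact: measurable_funB.
  exact: measurable_inv_pos.
have fmE x : (f x / m x = f x + f x * g x)%R.
  by rewrite /g; field; rewrite gt_eqF.
apply: le_trans (integralD_sub_abs_le intf (measurable_funM mf mg)).
under eq_integral do rewrite fmE.
apply: leeB => //; apply: le_trans (cauchy_schwarz mf mg) _; rewrite muleC.
apply: lee_wpmul2l; first exact: sqrte_ge0.
rewrite lee_sqrt; last by apply: integral_ge0 => x _; rewrite lee_fin sqr_ge0.
apply: le_integral_ge0 => x; first by rewrite lee_fin sqr_ge0.
rewrite lee_fin -real_normK ?num_real // ler_sqr ?nnegrE //.
exact: le_trans (fh x).
Qed.

End integral_bounds.

Section noisy_reward.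
Variables (R : realType) (Q : Type) (O : countType) (rstar : Q -> O -> bool).
Variables (rhop rhom hrhop hrhom : Q -> R).

Lemma p_pol_pmass (pi : Q -> O -> R) (q : Q) : is_policy pi ->
  p_pol rstar pi q = pmass (pi q) [set o | rstar q o].
Proof.
move=> /(_ q)[pi0 pi1]; rewrite /p_pol.
rewrite (_ : (fun o => _) = fun o => if rstar q o then 1 else 0); last first.
  by apply/funext => o; case: (rstar q o).
by rewrite Eo_if // mul0r add0r mul1r.
Qed.

Lemma Exi_rhat (q : Q) (o : O) : 0 <= rhop q <= 1 -> 0 <= rhom q <= 1 ->
  Exi (rhat rstar rhop rhom hrhop hrhom q o) =
  if rstar q o then (1 - rhom q - hrhop q) / (1 - hrhop q - hrhom q)
  else (rhop q - hrhop q) / (1 - hrhop q - hrhom q).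
Proof.
move=> /andP[hp0 hp1] /andP[hm0 hm1].
set D := 1 - hrhop q - hrhom q.
rewrite (_ : rhat _ _ _ _ _ q o = fun xi =>
    if xi <= (if rstar q o then 1 - rhom q else rhop q)
    then (1 - hrhop q) / D else (0 - hrhop q) / D); last first.
  apply/funext => xi; rewrite /rhat /rtilde /D.
  by case: (rstar q o) => /=; repeat case: ifP => _; ring.
by case: (rstar q o); rewrite Exi_if_le; try ring; apply/andP; split; lra.
Qed.

Lemma Lhat_gap (Mk : Q -> R) (pik pi : Q -> O -> R) (q : Q) :
  is_policy pik -> is_policy pi -> 0 <= rhop q <= 1 -> 0 <= rhom q <= 1 ->
  1 - rhop q - rhom q != 0 -> 1 - hrhop q - hrhom q != 0 ->
  Lhat rstar rhop rhom hrhop hrhom Mk pik pi q =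
  (p_pol rstar pi q - p_pol rstar pik q) / Mk' rhop rhom hrhop hrhom Mk q.
Proof.
move=> pikP piP hp hm D0 Dh0.
have [pik0 pik1] := pikP q; have [pi0 pi1] := piP q.
rewrite /Lhat (funext (fun o => Exi_rhat o hp hm)) !Eo_if // !p_pol_pmass //.
by rewrite /Mk' invfM mulrA; congr (_ * _); field; rewrite D0 Dh0.
Qed.

Lemma normB_p_pol_le1 (pik pi : Q -> O -> R) :
  is_policy pik -> is_policy pi ->
  forall q, `|p_pol rstar pi q - p_pol rstar pik q| <= 1.
Proof.
move=> pikP piP q; have [pik0 pik1] := pikP q; have [pi0 pi1] := piP q.
by rewrite !p_pol_pmass //; exact: normB_pmass_le1.
Qed.

Lemma normB_p_pol_le_TV (pik pi : Q -> O -> R) :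
  is_policy pik -> is_policy pi -> forall q,
  `|p_pol rstar pi q - p_pol rstar pik q| <= TV (pi q) (pik q).
Proof.
move=> pikP piP q; have [pik0 pik1] := pikP q; have [pi0 pi1] := piP q.
by rewrite !p_pol_pmass //; exact: normB_pmass_le_TV.
Qed.

End noisy_reward.

Lemma measurable_p_pol d (Q : measurableType d) (R : realType) (O : countType)
  (rstar : Q -> O -> bool) (pi : Q -> O -> R) : is_policy pi ->
  (forall o, measurable_fun [set: Q] (fun q => ((rstar q o)%:R : R))) ->
  (forall o, measurable_fun [set: Q] (fun q => pi q o)) ->
  measurable_fun [set: Q] (p_pol rstar pi).
Proof.
move=> piP mr mpi.
have -> : p_pol rstar pi =
    fun q => fine (\esum_(o in [set: O]) (pi q o * (rstar q o)%:R)%:E)%E.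
  apply/funext => q.
  rewrite p_pol_pmass // /pmass (esum_mkcond [set o | rstar q o]).
  congr fine; apply: eq_esum => o _.
  have -> : (o \in [set o | rstar q o]) = rstar q o.
    by apply/idP/idP => [/set_mem //|]; exact: mem_set.
  by case: (rstar q o); rewrite ?mulr1 ?mulr0.
apply: measurableT_comp => //; apply: measurable_esum => [q o|o].
  by rewrite lee_fin mulr_ge0 // (piP q).1.
by apply/measurable_EFinP; exact: measurable_funM.
Qed.

Theorem theorem6 (R : realType) (d : measure_display) (Q : measurableType d)
  (P : probability Q R) (O : countType)
  (rstar : Q -> O -> bool) (rhop rhom hrhop hrhom : Q -> R)
  (Mk : Q -> R) (pik : Q -> O -> R) :
  (forall q, 0 <= rhop q <= 1) -> (forall q, 0 <= rhom q <= 1) ->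
  (forall q, 0 < Mk q) ->
  (forall q, 0 < 1 - rhop q - rhom q) ->
  (forall q, 0 < 1 - hrhop q - hrhom q) ->
  is_policy pik ->
  (* measurability in q of all the data *)
  (forall o, measurable_fun [set: Q] (fun q => ((rstar q o)%:R : R))) ->
  measurable_fun [set: Q] rhop -> measurable_fun [set: Q] rhom ->
  measurable_fun [set: Q] hrhop -> measurable_fun [set: Q] hrhom ->
  measurable_fun [set: Q] Mk ->
  (forall o, measurable_fun [set: Q] (fun q => pik q o)) ->
  forall pi : Q -> O -> R, is_policy pi ->
  (forall o, measurable_fun [set: Q] (fun q => pi q o)) ->
  (\int[P]_q (p_pol rstar pi q - p_pol rstar pik q)%:E
   >= \int[P]_q (Lhat rstar rhop rhom hrhop hrhom Mk pik pi q)%:E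
      - 2%:E
        * sqrte (\int[P]_q
                   (((1 - Mk' rhop rhom hrhop hrhom Mk q)
                     / Mk' rhop rhom hrhop hrhom Mk q) ^+ 2)%:E)
        * sqrte (\int[P]_q ((TV (pi q) (pik q)) ^+ 2)%:E))%E.
Proof.
move=> hp hm Mk0 D0 Dh0 pikP mr mrp mrm mhp mhm mMk mpik pi piP mpi.
set gap := fun q => p_pol rstar pi q - p_pol rstar pik q.
set M' := Mk' rhop rhom hrhop hrhom Mk.
have gap_int : P.-integrable [set: Q] (EFin \o gap).
  apply: measurable_bounded_integrable => //.
  - exact: le_lt_trans (probability_le1 P measurableT) (ltry 1).
  - by apply: measurable_funB; exact: measurable_p_pol.
  - exists 1; split=> // M M1 q _ /=.
    have gap_le1 := normB_p_pol_le1 rstar pikP piP q.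
    by rewrite /gap (le_trans gap_le1) // ltW.
have mM' : measurable_fun [set: Q] M'.
  apply: measurable_funM => //.
  by apply: measurable_funM; [|apply: measurable_inv_pos => //];
    apply: measurable_funB => //; exact: measurable_funB.
have M'_gt0 q : 0 < M' q by rewrite mulr_gt0 ?divr_gt0.
under eq_integral do rewrite Lhat_gap ?lt0r_neq0 //.
apply: le_trans
  (integral_div_sub_le gap_int mM' M'_gt0 (normB_p_pol_le_TV rstar pikP piP)).
apply: leeB => //; rewrite -muleA -[leLHS]mul1e.
by apply: lee_wpmul2r; rewrite ?mule_ge0 ?sqrte_ge0 // lee_fin ler1n.
Qed.
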